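(* Consider an instance of the constructive \$-protection problem (all voter weights equal to 1) and let $\mathcal{V}_F\subseteq\mathcal{V}$ be the set of awarded voters. Suppose the attacker can make the designated candidate $c^\star$ win (obtain a total score strictly higher than every other candidate) by bribing a set $\mathcal{V}_B\subseteq\mathcal{V}\setminus\mathcal{V}_F$ with $\sum_{v_j\in\mathcal{V}_B}p_j^b\le B$. If $v_{j'}\prec v_j$, $v_{j'}\in\mathcal{V}_B$ and $v_j\notin\mathcal{V}_F\cup\mathcal{V}_B$, then the attacker can also make $c^\star$ win by bribing $(\mathcal{V}_B\setminus\{v_{j'}\})\cup\{v_j\}$ (within budget $B$).
   Context: Election model. Candidates $\mathcal{C}=\{c_1,\dots,c_m\}$, voters $\mathcal{V}=\{v_1,\dots,v_n\}$; voter $v_j$ has a preference list $\tau_j$ (a linear order of $\mathcal{C}$), weight $w_j$, awarding price $p_j^a\in\mathbb{Z}_{>0}$, bribing price $p_j^b\in\mathbb{Z}_{>0}$. A scoring rule $\alpha=(\alpha_1\ge\cdots\ge\alpha_m)$ of nonnegative integers gives the candidate at position $z$ of $v_j$'s list $w_j\alpha_z$ points; total score is the sum over voters. In the constructive \$-protection problem all $w_j=1$, there is a designated candidate $c^\star$, a defense budget $F$ and an attack budget $B$; the attacker may choose $\mathcal{V}_B\subseteq\mathcal{V}\setminus\mathcal{V}_F$ with total bribing price at most $B$ and replace each list in $\mathcal{V}_B$ by an arbitrary list. Dominance: $v_{j'}\prec v_j$ if either (i) $\tau_j=\tau_{j'}$, $w_j\ge w_{j'}$, $p_j^a\le p_{j'}^a$,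 $p_j^b\le p_{j'}^b$ with at least one of these three inequalities strict; or (ii) $\tau_j=\tau_{j'}$, $w_j=w_{j'}$, $p_j^a=p_{j'}^a$, $p_j^b=p_{j'}^b$ and $j'<j$. *)

From mathcomp Require Import all_boot all_order all_fingroup.
Set Implicit Arguments. Unset Strict Implicit. Unset Printing Implicit Defensive.

(* Candidates are 'I_m, voters are 'I_n.  A preference list is a permutation
   tau : {perm 'I_m}; tau z is the candidate at position z (0-indexed). *)

Definition profile (m n : nat) := 'I_n -> {perm 'I_m}.

Definition score (m n : nat) (alpha : 'I_m -> nat) (w : 'I_n -> nat)
  (tau : profile m n) (c : 'I_m) : nat :=
  \sum_(j < n) \sum_(z < m) (if tau j z == c then w j * alpha z else 0).

Definition bribed (m n : nat) (tau : profile m n) (VB : {set 'I_n})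
  (tau' : profile m n) : profile m n :=
  fun j => if j \in VB then tau' j else tau j.

Definition wins (m n : nat) (alpha : 'I_m -> nat) (w : 'I_n -> nat)
  (tau : profile m n) (cstar : 'I_m) : Prop :=
  forall c : 'I_m, c != cstar -> score alpha w tau c < score alpha w tau cstar.

Definition attack_succeeds (m n : nat) (alpha : 'I_m -> nat) (w : 'I_n -> nat)
  (pb : 'I_n -> nat) (B : nat) (tau : profile m n) (cstar : 'I_m)
  (VF VB : {set 'I_n}) : Prop :=
  [/\ [disjoint VB & VF],
      \sum_(j in VB) pb j <= B
    & exists tau' : profile m n, wins alpha w (bribed tau VB tau') cstar].

(* Dominance: dominated j' j  means  v_{j'} \prec v_j. *)
Definition dominated (m n : nat) (tau : profile m n) (w pa pb : 'I_n -> nat)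
  (j' j : 'I_n) : Prop :=
  (tau j = tau j' /\ w j' <= w j /\ pa j <= pa j' /\ pb j <= pb j' /\
     (w j' < w j \/ pa j < pa j' \/ pb j < pb j'))
  \/
  (tau j = tau j' /\ w j = w j' /\ pa j = pa j' /\ pb j = pb j' /\
     (j' < j)%N).

From mathcomp Require Import all_boot all_order all_fingroup.
Set Implicit Arguments. Unset Strict Implicit. Unset Printing Implicit Defensive.

(* Let s be the transposition of j and j'.  As tau j = tau j', bribing
   s^-1(VB) = j |: (VB :\ j') with the new lists tau' \o s produces the old
   winning profile relabelled by s, and relabelling voters of equal weight
   changes no score.  The budget changes by pb j - pb j' <= 0. *)

Section Relabelling.

Variables (m n : nat) (alpha : 'I_m -> nat) (w : 'I_n -> nat).

Lemma score_reindex (s : {perm 'I_n}) (P P' : profile m n) (c : 'I_m) :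
  (forall k, w (s k) = w k) -> (forall k, P' k = P (s k)) ->
  score alpha w P' c = score alpha w P c.
Proof.
move=> ws P'E; rewrite /score [RHS](reindex_inj (@perm_inj _ s)) /=.
by apply: eq_bigr => k _; rewrite P'E ws.
Qed.

Lemma wins_reindex (s : {perm 'I_n}) (P P' : profile m n) (cstar : 'I_m) :
  (forall k, w (s k) = w k) -> (forall k, P' k = P (s k)) ->
  wins alpha w P cstar -> wins alpha w P' cstar.
Proof.
move=> ws P'E win c c_neq.
by rewrite !(score_reindex _ ws P'E); apply: win.
Qed.

End Relabelling.

Lemma bribed_reindex (m n : nat) (s : {perm 'I_n}) (tau tau' : profile m n)
    (VB : {set 'I_n}) (k : 'I_n) :
  (forall k, tau (s k) = tau k) ->
  bribed tau (s @^-1: VB) (fun k => tau' (s k)) k = bribed tau VB tau' (s k).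
Proof. by move=> tau_s; rewrite /bribed inE; case: ifP; rewrite ?tau_s. Qed.

Section Exchange.

Variables (T : finType) (A : {set T}) (x y : T).
Hypotheses (yA : y \in A) (xA : x \notin A).

Lemma preimset_tperm : tperm x y @^-1: A = x |: (A :\ y).
Proof.
have x_neq_y : x != y by apply: contraNneq xA => ->.
apply/setP => k; rewrite !inE.
case: tpermP => [->|->|/eqP k_x /eqP k_y]; first by rewrite eqxx yA.
- by rewrite (negbTE xA) eqxx eq_sym (negbTE x_neq_y).
- by rewrite (negbTE k_x) (negbTE k_y).
Qed.

Lemma leq_sum_exchange (f : T -> nat) :
  f x <= f y -> \sum_(k in x |: (A :\ y)) f k <= \sum_(k in A) f k.
Proof.
move=> fxy; rewrite (big_setD1 y yA) big_setU1 ?leq_add2r //=.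
by rewrite !inE negb_and xA orbT.
Qed.

Lemma disjoint_exchange (C : {set T}) :
  [disjoint A & C] -> x \notin C -> [disjoint x |: (A :\ y) & C].
Proof.
rewrite !disjoints_subset => AC xC.
by rewrite subUset sub1set inE xC (subset_trans (subsetDl A [set y])).
Qed.

End Exchange.

Lemma dominated_same_list (m n : nat) (tau : profile m n) (w pa pb : 'I_n -> nat)
    (j' j : 'I_n) :
  dominated tau w pa pb j' j -> tau j = tau j' /\ pb j <= pb j'.
Proof. by case=> [[? [_ [_ [? _]]]] | [? [_ [_ [-> _]]]]]. Qed.

Lemma tperm_invariant (T : finType) (U : Type) (f : T -> U) (x y : T) :
  f x = f y -> forall k, f (tperm x y k) = f k.
Proof. by move=> fxy k; case: tpermP => [->|->|]. Qed.

Theorem lemma7 (m n : nat) (alpha : 'I_m -> nat)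
  (Halpha : forall z1 z2 : 'I_m, (z1 <= z2)%N -> (alpha z2 <= alpha z1)%N)
  (tau : 'I_n -> {perm 'I_m}) (w pa pb : 'I_n -> nat)
  (Hw : forall j, w j = 1%N)
  (Hpa : forall j, (0 < pa j)%N) (Hpb : forall j, (0 < pb j)%N)
  (cstar : 'I_m) (F B : nat) (VF VB : {set 'I_n})
  (HVF : (\sum_(j in VF) pa j <= F)%N)
  (j j' : 'I_n) :
  attack_succeeds alpha w pb B tau cstar VF VB ->
  dominated tau w pa pb j' j ->
  j' \in VB -> j \notin VF :|: VB ->
  attack_succeeds alpha w pb B tau cstar VF (j |: (VB :\ j')).
Proof.
move=> [disVB budget [tau' win]] /dominated_same_list [tau_jj' pb_jj'] j'VB.
rewrite in_setU negb_or => /andP [jVF jVB].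
split.
- exact: disjoint_exchange.
- exact: leq_trans (leq_sum_exchange j'VB jVB pb_jj') budget.
- exists (fun k => tau' (tperm j j' k)).
  rewrite -(preimset_tperm j'VB jVB).
  apply: (wins_reindex (s := tperm j j')) win => k; first by rewrite !Hw.
  exact/bribed_reindex/tperm_invariant.
Qed.
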